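(* Let $k_{ap}>0$, $k_{ad}>0$, $\omega_o>0$, $c_r>0$, $d\in\mathbb R$, $\varepsilon>0$, $L_f\ge0$. Let $f:[0,\infty)\to\mathbb R$ be absolutely continuous with $|\dot f(t)|\le L_f$ for all $t\ge0$. Consider a solution on $[0,\infty)$ of the closed-loop system $$\dot x_1=x_2,\qquad \dot x_2=f(t)-\lambda(t),$$ $$\dot\xi=-\omega_o\xi-\omega_o^2x_2+\omega_o\lambda,\qquad \hat f=\xi+\omega_o x_2,$$ $$\lambda(t)=k_{ap}\big(x_1-r\big)+k_{ad}\big(x_2-\dot r\big)+\hat f(t)-\ddot r(t),$$ where the reference converges to $d-\varepsilon$: $$r(t)=(d-\varepsilon)+\big(x_1(0)-(d-\varepsilon)\big)e^{-c_rt}+\big(x_2(0)+c_r(x_1(0)-(d-\varepsilon))\big)te^{-c_rt}.$$ Let $h$ be the impulse response of $H(s)=\frac{1}{s^2+k_{ad}s+k_{ap}}$ and $\|h\|_{L_1}=\int_0^\infty|h(\tau)|\,d\tau$. If $$\varepsilon>\|h\|_{L_1}\frac{L_f}{\omega_o},$$ then there exists $T_\varepsilon<\infty$ such that $x_1(t)\le d$ for all $t\ge T_\varepsilon$.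
   Context: Surrogate model of Lagrangian safe RL: $x_1$ models the discounted cost return of the current policy, $x_2$ its derivative, $\lambda$ the Lagrange multiplier, $f$ a lumped unknown disturbance, $(\xi,\hat f)$ a reduced-order extended state observer with gain $\omega_o$, $d$ the cost threshold and $\varepsilon$ a safety margin; $r$ is the critically damped reference (solution of $\ddot r=-2c_r\dot r-c_r^2(r-(d-\varepsilon))$, $r(0)=x_1(0)$, $\dot r(0)=x_2(0)$). The impulse response $h$ solves $\ddot h+k_{ad}\dot h+k_{ap}h=0$, $h(0)=0$, $\dot h(0)=1$. *)

From Stdlib Require Import Reals Lra.
From Coquelicot Require Import Coquelicot.
Open Scope R_scope.

(* Critically damped reference trajectory converging to d - eps,
   with r(0) = x10, r'(0) = x20. *)
Definition ref_traj (d eps cr x10 x20 : R) (t : R) : R :=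
  (d - eps) + (x10 - (d - eps)) * exp (- cr * t)
  + (x20 + cr * (x10 - (d - eps))) * t * exp (- cr * t).

Definition closed_loop_lambda (kap kad wo : R) (r x1 x2 xi : R -> R) (t : R) : R :=
  kap * (x1 t - r t) + kad * (x2 t - Derive r t)
  + (xi t + wo * x2 t) - Derive_n r 2 t.

(* The tracking error e = x1 - r satisfies e'' + kad e' + kap e = F, where F = f - fhat is the
   observer error: the multiplier cancels the reference and the estimated disturbance.  The
   observer error satisfies F' = f' - wo F, so |F| is eventually at most Lf / wo + eta.  By
   variation of constants, e(t) is a free response of the stable error dynamics, which vanishes,
   plus the convolution of h with F, which is eventually at most ||h||_L1 (Lf / wo + eta) in
   absolute value.  Since r tends to d - eps and eps > ||h||_L1 Lf / wo, x1 = r + e eventually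
   stays below d. *)

From Stdlib Require Import Reals Lra.
From Coquelicot Require Import Coquelicot.
Open Scope R_scope.

Lemma is_derive_ge0_le (phi dphi : R -> R) (a b : R) : a <= b ->
  (forall x, a <= x <= b -> is_derive phi x (dphi x)) ->
  (forall x, a <= x <= b -> 0 <= dphi x) -> phi a <= phi b.
Proof.
  intros Hab Hd Hpos.
  assert (Hin : forall x, Rmin a b <= x <= Rmax a b -> a <= x <= b).
  { rewrite Rmin_left, Rmax_right by lra. easy. }
  destruct (MVT_gen phi a b dphi) as [c [Hc Hmvt]].
  - intros x Hx. apply Hd, Hin; lra.
  - intros x Hx. apply continuity_pt_filterlim, (ex_derive_continuous (V := R_NormedModule)).
    eexists. apply Hd, Hin, Hx.
  - assert (0 <= dphi c * (b - a)) by (apply Rmult_le_pos; [apply Hpos, Hin|]; lra).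
    lra.
Qed.

Lemma Rabs_sub_le_of_is_derive (phi dphi psi dpsi : R -> R) (a b : R) : a <= b ->
  (forall x, a <= x <= b -> is_derive phi x (dphi x)) ->
  (forall x, a <= x <= b -> is_derive psi x (dpsi x)) ->
  (forall x, a <= x <= b -> Rabs (dphi x) <= dpsi x) ->
  Rabs (phi b - phi a) <= psi b - psi a.
Proof.
  intros Hab Hphi Hpsi Hle.
  assert (Hsub : psi a - phi a <= psi b - phi b).
  { apply (is_derive_ge0_le (fun x => psi x - phi x) (fun x => dpsi x - dphi x)); auto.
    - intros x Hx. apply (is_derive_minus psi phi); auto.
    - intros x Hx. specialize (Hle x Hx). apply Rabs_le_between in Hle. lra. }
  assert (Hadd : psi a + phi a <= psi b + phi b).
  { apply (is_derive_ge0_le (fun x => psi x + phi x) (fun x => dpsi x + dphi x)); auto.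
    - intros x Hx. apply (is_derive_plus psi phi); auto.
    - intros x Hx. specialize (Hle x Hx). apply Rabs_le_between in Hle. lra. }
  apply Rabs_le; lra.
Qed.

Lemma exp_ge_sqr_div4 (x : R) : 0 <= x -> x ^ 2 / 4 <= exp x.
Proof.
  intros Hx.
  replace x with (x / 2 + x / 2) at 2 by field.
  rewrite exp_plus.
  pose proof (exp_ineq1_le (x / 2)).
  assert (x / 2 * (x / 2) <= exp (x / 2) * exp (x / 2)) by (apply Rmult_le_compat; lra).
  nra.
Qed.

Lemma affine_mul_exp_eventually_le (a b c eta : R) :
  0 <= a -> 0 <= b -> 0 < c -> 0 < eta ->
  exists T, forall t, T <= t -> (a + b * t) * exp (- (c * t)) <= eta.
Proof.
  intros Ha Hb Hc Heta.
  assert (Hc2 : 0 < eta * c ^ 2) by (apply Rmult_lt_0_compat; nra).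
  exists (Rmax 1 (4 * (a + b) / (eta * c ^ 2))).
  intros t Ht.
  assert (Ht1 : 1 <= t) by (eapply Rle_trans; [apply Rmax_l | exact Ht]).
  assert (Ht2 : 4 * (a + b) <= t * (eta * c ^ 2)).
  { assert (H := Rle_trans _ _ _ (Rmax_r 1 _) Ht).
    apply (Rmult_le_compat_r (eta * c ^ 2)) in H; [|lra].
    unfold Rdiv in H. rewrite Rmult_assoc, Rinv_l in H by lra. lra. }
  pose proof (exp_ge_sqr_div4 (c * t) ltac:(nra)) as Hexp.
  rewrite exp_Ropp.
  apply (Rmult_le_reg_r (exp (c * t))); [apply exp_pos|].
  rewrite Rmult_assoc, Rinv_l by (pose proof (exp_pos (c * t)); lra).
  assert (a + b * t <= (a + b) * t) by nra.
  nra.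
Qed.

Lemma RInt_le_is_RInt_gen (g : R -> R) (a l b : R) :
  (forall u, continuous g u) -> (forall u, 0 <= g u) ->
  is_RInt_gen g (at_point a) (Rbar_locally p_infty) l ->
  a <= b -> RInt g a b <= l.
Proof.
  intros Hcont Hpos Hl Hab.
  destruct (Rle_or_lt (RInt g a b) l) as [|Hlt]; [easy | exfalso].
  assert (Hdl : 0 < RInt g a b - l) by lra.
  destruct (Hl _ (locally_ball l (mkposreal _ Hdl))) as [Qa Qb HQa [M HM] Himp].
  set (c := Rmax (M + 1) b).
  assert (HMc : M < c) by (pose proof (Rmax_l (M + 1) b); unfold c; lra).
  assert (Hbc : b <= c) by apply Rmax_r.
  destruct (Himp a c HQa (HM c HMc)) as [y [Hy Hyl]]; simpl in Hy.
  assert (Hex : forall u v, ex_RInt g u v)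
    by (intros; apply (ex_RInt_continuous (V := R_CompleteNormedModule)); auto).
  assert (Htail : 0 <= RInt g b c) by (apply RInt_ge_0; auto).
  pose proof (RInt_Chasles g a b c (Hex _ _) (Hex _ _)) as Hch.
  rewrite (is_RInt_unique _ _ _ _ Hy) in Hch.
  change (Rabs (y - l) < RInt g a b - l) in Hyl.
  change (RInt g a b + RInt g b c = y) in Hch.
  apply Rabs_lt_between in Hyl. lra.
Qed.

(* Lyapunov function of q'' + kad q' + kap q = 0 at the state (q, p = q'). *)
Definition oscillator_energy (kap kad q p : R) : R :=
  p ^ 2 + kap * q ^ 2 + kad * q * p + kad ^ 2 / 2 * q ^ 2.

Lemma oscillator_energy_ge (kap kad q p : R) :
  p ^ 2 / 2 + kap * q ^ 2 <= oscillator_energy kap kad q p.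
Proof.
  unfold oscillator_energy.
  assert (0 <= (p + kad * q) ^ 2) by apply pow2_ge_0.
  nra.
Qed.

Lemma oscillator_energy_le (kap kad q p : R) : 0 < kap ->
  oscillator_energy kap kad q p <= (3 / 2 + kad ^ 2 / kap) * (p ^ 2 + kap * q ^ 2).
Proof.
  intros Hkap. unfold oscillator_energy.
  assert (0 <= kad ^ 2 / kap * p ^ 2)
    by (apply Rmult_le_pos; [apply Rdiv_le_0_compat; nra | nra]).
  replace ((3 / 2 + kad ^ 2 / kap) * (p ^ 2 + kap * q ^ 2)) with
    (3 / 2 * p ^ 2 + 3 / 2 * kap * q ^ 2 + kad ^ 2 / kap * p ^ 2 + kad ^ 2 * q ^ 2)
    by (field; lra).
  assert (0 <= (p - kad * q) ^ 2) by apply pow2_ge_0.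
  assert (0 <= kap * q ^ 2) by (apply Rmult_le_pos; nra).
  nra.
Qed.

Section DampedOscillator.

Variables (kap kad : R) (q p : R -> R).
Hypotheses (kap_gt0 : 0 < kap) (kad_gt0 : 0 < kad).
Hypothesis q_deriv : forall t, is_derive q t (p t).
Hypothesis p_deriv : forall t, is_derive p t (- kad * p t - kap * q t).

Let E t := oscillator_energy kap kad (q t) (p t).
Let rate := kad / (3 / 2 + kad ^ 2 / kap).

Lemma oscillator_energy_exp_decay t : 0 <= t -> E t <= E 0 * exp (- (rate * t)).
Proof.
  intros Ht.
  assert (HM : 0 < 3 / 2 + kad ^ 2 / kap)
    by (assert (0 <= kad ^ 2 / kap) by (apply Rdiv_le_0_compat; nra); lra).
  assert (Hdecr : E t * exp (rate * t) <= E 0 * exp (rate * 0)).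
  { apply Ropp_le_cancel.
    apply (is_derive_ge0_le (fun s => - (E s * exp (rate * s)))
      (fun s => (kad * (p s ^ 2 + kap * q s ^ 2) - rate * E s) * exp (rate * s))); [easy | |].
    - intros x _. unfold E, oscillator_energy. auto_derive.
      + repeat split; eexists; eauto.
      + change (fun y => q y) with q; change (fun y => p y) with p.
        rewrite (is_derive_unique _ _ _ (q_deriv x)), (is_derive_unique _ _ _ (p_deriv x)).
        field.
    - intros x _. apply Rmult_le_pos; [|apply Rlt_le, exp_pos].
      pose proof (oscillator_energy_le kap kad (q x) (p x) kap_gt0) as Hle.
      apply (Rmult_le_compat_l rate) in Hle; [|apply Rlt_le, Rdiv_lt_0_compat; lra].
      rewrite <- Rmult_assoc in Hle.
      replace (rate * (3 / 2 + kad ^ 2 / kap)) with kad in Hle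
        by (unfold rate, Rdiv; rewrite Rmult_assoc, Rinv_l; lra).
      unfold E. lra. }
  rewrite Rmult_0_r, exp_0, Rmult_1_r in Hdecr.
  rewrite exp_Ropp.
  apply (Rmult_le_reg_r (exp (rate * t))); [apply exp_pos|].
  rewrite Rmult_assoc, Rinv_l by (pose proof (exp_pos (rate * t)); lra).
  lra.
Qed.

Lemma oscillator_vanishes eta : 0 < eta ->
  exists T, forall t, T <= t -> Rabs (q t) <= eta /\ Rabs (p t) <= eta.
Proof.
  intros Heta.
  set (target := Rmin (kap * eta ^ 2) (eta ^ 2 / 2)).
  assert (Htarget : 0 < target).
  { assert (0 < eta ^ 2) by (apply pow_lt; lra).
    apply Rmin_glb_lt; [apply Rmult_lt_0_compat|]; lra. }
  assert (HE0 : 0 <= E 0).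
  { eapply Rle_trans; [|apply oscillator_energy_ge]. pose proof (pow2_ge_0 (p 0)).
    pose proof (pow2_ge_0 (q 0)). nra. }
  assert (Hrate : 0 < rate).
  { apply Rdiv_lt_0_compat; [lra|]. assert (0 <= kad ^ 2 / kap) by (apply Rdiv_le_0_compat; nra).
    lra. }
  destruct (affine_mul_exp_eventually_le (E 0) 0 rate target HE0 (Rle_refl 0) Hrate Htarget)
    as [T HT].
  exists (Rmax T 0). intros t Ht.
  assert (HEt : E t <= target).
  { specialize (HT t (Rle_trans _ _ _ (Rmax_l T 0) Ht)).
    rewrite Rmult_0_l, Rplus_0_r in HT.
    eapply Rle_trans; [apply oscillator_energy_exp_decay | exact HT].
    exact (Rle_trans _ _ _ (Rmax_r T 0) Ht). }
  pose proof (oscillator_energy_ge kap kad (q t) (p t)) as Hge. unfold E in HEt.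
  assert (Hmin1 : target <= kap * eta ^ 2) by apply Rmin_l.
  assert (Hmin2 : target <= eta ^ 2 / 2) by apply Rmin_r.
  pose proof (pow2_ge_0 (p t)).
  assert (0 <= kap * q t ^ 2) by (apply Rmult_le_pos; [lra | apply pow2_ge_0]).
  assert (Hq : q t ^ 2 <= eta ^ 2) by (apply (Rmult_le_reg_l kap); lra).
  assert (Hp : p t ^ 2 <= eta ^ 2) by lra.
  rewrite <- (Rabs_pos_eq eta) by lra.
  split; apply Rsqr_le_abs_0; unfold Rsqr; simpl in *; lra.
Qed.

End DampedOscillator.

Section Observer.

Variables (wo Lf : R) (f g : R -> R).
Hypotheses (wo_gt0 : 0 < wo) (Lf_ge0 : 0 <= Lf).
Hypothesis f_lipschitz :
  forall s t, 0 <= s -> 0 <= t -> Rabs (f t - f s) <= Lf * Rabs (t - s).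
Hypothesis g_deriv : forall s, 0 < s -> is_derive g s (wo * (f s - g s)).

Lemma observer_error_bound t0 t : 0 < t0 -> t0 <= t ->
  Rabs (f t - g t)
  <= Lf / wo + exp (- (wo * (t - t0))) * (Rabs (f t0 - g t0) + Lf * (t - t0)).
Proof.
  intros Ht0 Ht.
  pose proof (exp_pos (wo * t)) as Et. pose proof (exp_pos (wo * t0)) as Et0.
  (* Freezing f at the final time t leaves only f s - f t, which the Lipschitz bound controls. *)
  assert (Hcmp : Rabs (exp (wo * t) * (g t - f t) - exp (wo * t0) * (g t0 - f t))
                 <= Lf * exp (wo * t) * (t - t + / wo) - Lf * exp (wo * t0) * (t - t0 + / wo)).
  { apply (Rabs_sub_le_of_is_derive (fun s => exp (wo * s) * (g s - f t))
      (fun s => wo * exp (wo * s) * (f s - f t))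
      (fun s => Lf * exp (wo * s) * (t - s + / wo))
      (fun s => Lf * wo * exp (wo * s) * (t - s))); [easy | | |].
    - intros s Hs. auto_derive.
      + exists (wo * (f s - g s)). apply g_deriv. lra.
      + change (fun y => g y) with g.
        rewrite (is_derive_unique _ _ _ (g_deriv s ltac:(lra))). field.
    - intros s Hs. auto_derive; [easy | field; lra].
    - intros s Hs. pose proof (exp_pos (wo * s)).
      specialize (f_lipschitz s t ltac:(lra) ltac:(lra)).
      rewrite (Rabs_pos_eq (t - s)) in f_lipschitz by lra.
      rewrite !Rabs_mult, (Rabs_pos_eq wo), (Rabs_pos_eq (exp _)), (Rabs_minus_sym (f s)) by lra.
      replace (Lf * wo * exp (wo * s) * (t - s)) with (wo * exp (wo * s) * (Lf * (t - s)))
        by ring.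
      apply Rmult_le_compat_l; [apply Rmult_le_pos|]; lra. }
  assert (Hend : 0 <= Lf * exp (wo * t0) * (t - t0 + / wo)).
  { pose proof (Rinv_0_lt_compat wo wo_gt0).
    apply Rmult_le_pos; [apply Rmult_le_pos|]; lra. }
  replace (Lf * exp (wo * t) * (t - t + / wo)) with (Lf * exp (wo * t) / wo) in Hcmp
    by (field; lra).
  assert (Hinit : Rabs (g t0 - f t) <= Rabs (f t0 - g t0) + Lf * (t - t0)).
  { specialize (f_lipschitz t0 t ltac:(lra) ltac:(lra)).
    rewrite (Rabs_pos_eq (t - t0)) in f_lipschitz by lra.
    replace (g t0 - f t) with (- (f t0 - g t0) - (f t - f t0)) by ring.
    eapply Rle_trans; [apply Rabs_triang|]. rewrite !Rabs_Ropp. lra. }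
  assert (Hscaled : exp (wo * t) * Rabs (f t - g t)
          <= Lf * exp (wo * t) / wo + exp (wo * t0) * (Rabs (f t0 - g t0) + Lf * (t - t0))).
  { rewrite <- (Rabs_pos_eq (exp (wo * t))) at 1 by lra. rewrite <- Rabs_mult.
    replace (exp (wo * t) * (f t - g t)) with
      (- (exp (wo * t) * (g t - f t) - exp (wo * t0) * (g t0 - f t))
       - exp (wo * t0) * (g t0 - f t)) by ring.
    eapply Rle_trans; [apply Rabs_triang|].
    rewrite !Rabs_Ropp, Rabs_mult, (Rabs_pos_eq (exp (wo * t0))) by lra.
    apply (Rmult_le_compat_l (exp (wo * t0))) in Hinit; lra. }
  replace (- (wo * (t - t0))) with (wo * t0 + - (wo * t)) by ring.
  rewrite exp_plus, exp_Ropp.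
  apply (Rmult_le_reg_l (exp (wo * t))); [easy|].
  eapply Rle_trans; [exact Hscaled|].
  right. field. lra.
Qed.

Lemma observer_error_eventually_le eta : 0 < eta ->
  exists T, 1 <= T /\ forall s, T <= s -> Rabs (f s - g s) <= Lf / wo + eta.
Proof.
  intros Heta.
  destruct (affine_mul_exp_eventually_le (Rabs (f 1 - g 1)) Lf wo eta
              (Rabs_pos _) Lf_ge0 wo_gt0 Heta) as [T HT].
  exists (Rmax 1 (T + 1)). split; [apply Rmax_l|].
  intros s Hs.
  pose proof (Rmax_l 1 (T + 1)). pose proof (Rmax_r 1 (T + 1)).
  pose proof (observer_error_bound 1 s ltac:(lra) ltac:(lra)).
  specialize (HT (s - 1) ltac:(lra)).
  lra.
Qed.

Lemma observer_error_locally_bounded T :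
  exists K, forall s, 1 <= s <= T -> Rabs (f s - g s) <= K.
Proof.
  exists (Lf / wo + (Rabs (f 1 - g 1) + Lf * Rabs (T - 1))).
  intros s Hs.
  eapply Rle_trans; [apply (observer_error_bound 1 s); lra|].
  apply Rplus_le_compat_l.
  assert (Hexp : exp (- (wo * (s - 1))) <= 1).
  { pose proof (exp_ineq1_le (wo * (s - 1))).
    assert (0 <= wo * (s - 1)) by (apply Rmult_le_pos; lra).
    apply (Rmult_le_reg_r (exp (wo * (s - 1)))); [apply exp_pos|].
    rewrite <- exp_plus, Rplus_opp_l, exp_0. lra. }
  assert (Lf * (s - 1) <= Lf * Rabs (T - 1))
    by (apply Rmult_le_compat_l; [easy | rewrite Rabs_pos_eq; lra]).
  pose proof (Rabs_pos (f 1 - g 1)).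
  assert (0 <= Lf * (s - 1)) by (apply Rmult_le_pos; lra).
  apply Rle_trans with (1 * (Rabs (f 1 - g 1) + Lf * (s - 1))).
  - apply Rmult_le_compat_r; lra.
  - lra.
Qed.

End Observer.

Section VariationOfConstants.

Variables (kap kad : R) (h h' : R -> R).
Hypotheses (kap_gt0 : 0 < kap) (kad_gt0 : 0 < kad).
Hypothesis h_deriv : forall t, is_derive h t (h' t).
Hypothesis h'_deriv : forall t, is_derive h' t (- kad * h' t - kap * h t).
Hypotheses (h_0 : h 0 = 0) (h'_0 : h' 0 = 1).

(* The value at time tau of the solution of q'' + kad q' + kap q = 0 with q(0) = q0,
   q'(0) = p0. *)
Definition free_response (q0 p0 tau : R) : R := h tau * p0 + (h' tau + kad * h tau) * q0.

Lemma free_response_0 q0 p0 : free_response q0 p0 0 = q0.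
Proof. unfold free_response. rewrite h_0, h'_0. ring. Qed.

Lemma Rabs_free_response_le q0 p0 tau eta :
  Rabs (h tau) <= eta -> Rabs (h' tau) <= eta ->
  Rabs (free_response q0 p0 tau) <= eta * (Rabs p0 + (1 + kad) * Rabs q0).
Proof.
  intros Hh Hh'. unfold free_response.
  eapply Rle_trans; [apply Rabs_triang|].
  rewrite !Rabs_mult.
  eapply Rle_trans; [apply Rplus_le_compat_l, Rmult_le_compat_r, Rabs_triang; apply Rabs_pos|].
  rewrite Rabs_mult, (Rabs_pos_eq kad) by lra.
  pose proof (Rabs_pos p0). pose proof (Rabs_pos q0).
  assert (Rabs (h tau) * Rabs p0 <= eta * Rabs p0) by (apply Rmult_le_compat_r; lra).
  assert ((Rabs (h' tau) + kad * Rabs (h tau)) * Rabs q0 <= (eta + kad * eta) * Rabs q0)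
    by (apply Rmult_le_compat_r; nra).
  lra.
Qed.

Variables (e e' F : R -> R).
Hypothesis e_deriv : forall s, 0 < s -> is_derive e s (e' s).
Hypothesis e'_deriv : forall s, 0 < s -> is_derive e' s (F s - kap * e s - kad * e' s).

(* Variation of constants without integrating F: the free response at time t of the state
   reached at time s varies in s exactly by the convolution integrand h (t - s) F s. *)
Lemma free_response_state_is_derive t s : 0 < s ->
  is_derive (fun s => free_response (e s) (e' s) (t - s)) s (h (t - s) * F s).
Proof.
  intros Hs. unfold free_response. auto_derive.
  - repeat split; eexists; eauto.
  - change (fun y => h y) with h. change (fun y => h' y) with h'.
    change (fun y => e y) with e. change (fun y => e' y) with e'.
    rewrite (is_derive_unique _ _ _ (h_deriv _)), (is_derive_unique _ _ _ (h'_deriv _)),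
      (is_derive_unique _ _ _ (e_deriv s Hs)), (is_derive_unique _ _ _ (e'_deriv s Hs)).
    replace (t + - s) with (t - s) by ring. field.
Qed.

Let W t s := free_response (e s) (e' s) (t - s).

Lemma free_response_state_sub_small_kernel t a b eta K : 0 < a <= b ->
  (forall s, a <= s <= b -> Rabs (h (t - s)) <= eta /\ Rabs (F s) <= K) ->
  Rabs (W t b - W t a) <= K * eta * (b - a).
Proof.
  intros Hab Hsmall.
  replace (K * eta * (b - a)) with (K * eta * b - K * eta * a) by ring.
  apply (Rabs_sub_le_of_is_derive (W t) (fun s => h (t - s) * F s)
           (fun s => K * eta * s) (fun _ => K * eta)); [lra | | |].
  - intros s Hs. apply free_response_state_is_derive. lra.
  - intros s Hs. auto_derive; [easy | ring].
  - intros s Hs. destruct (Hsmall s Hs) as [Hh HF].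
    rewrite Rabs_mult, (Rmult_comm K).
    apply Rmult_le_compat; auto using Rabs_pos.
Qed.

Lemma Rabs_h_continuous u : continuous (fun u => Rabs (h u)) u.
Proof.
  apply continuous_Rabs_comp, (ex_derive_continuous (V := R_NormedModule)).
  eexists. apply h_deriv.
Qed.

Lemma free_response_state_sub_L1 (t a C normh : R) : 0 < a <= t ->
  is_RInt_gen (fun u => Rabs (h u)) (at_point 0) (Rbar_locally p_infty) normh ->
  (forall s, a <= s <= t -> Rabs (F s) <= C) ->
  Rabs (W t t - W t a) <= C * normh.
Proof.
  intros Hat Hnormh HF.
  set (N := fun b => RInt (fun u => Rabs (h u)) 0 b : R).
  assert (HN : forall b, is_derive N b (Rabs (h b))).
  { intros b. apply (is_derive_RInt (fun u => Rabs (h u)) N 0 b); [|apply Rabs_h_continuous].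
    apply filter_forall. intros c.
    apply (RInt_correct (V := R_CompleteNormedModule)),
      (ex_RInt_continuous (V := R_CompleteNormedModule)).
    intros; apply Rabs_h_continuous. }
  assert (HNle : N (t - a) <= normh).
  { apply (RInt_le_is_RInt_gen _ 0); auto using Rabs_h_continuous, Rabs_pos. lra. }
  assert (HC : 0 <= C) by (eapply Rle_trans; [apply Rabs_pos | apply (HF a); lra]).
  eapply Rle_trans.
  { apply (Rabs_sub_le_of_is_derive (W t) (fun s => h (t - s) * F s)
             (fun s => - C * N (t - s)) (fun s => C * Rabs (h (t - s)))); [lra | | |].
    - intros s Hs. apply free_response_state_is_derive. lra.
    - intros s _. auto_derive.
      + exists (Rabs (h (t + - s))). apply HN.
      + change (fun y => N y) with N. rewrite (is_derive_unique _ _ _ (HN _)).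
        replace (t + - s) with (t - s) by ring. ring.
    - intros s Hs. rewrite Rabs_mult, Rmult_comm.
      apply Rmult_le_compat_r; [apply Rabs_pos | apply HF; lra]. }
  assert (N0 : N 0 = 0) by (unfold N; rewrite RInt_point; reflexivity).
  replace (t - t) with 0 by ring. rewrite N0.
  apply (Rmult_le_compat_l C) in HNle; lra.
Qed.

Lemma forced_oscillator_eventually_le (B normh gap : R) : 0 < gap ->
  is_RInt_gen (fun u => Rabs (h u)) (at_point 0) (Rbar_locally p_infty) normh ->
  (forall eta, 0 < eta -> exists T, 1 <= T /\ forall s, T <= s -> Rabs (F s) <= B + eta) ->
  (forall T, exists K, forall s, 1 <= s <= T -> Rabs (F s) <= K) ->
  exists T, forall t, T <= t -> Rabs (e t) <= normh * B + gap.
Proof.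
  intros Hgap Hnormh HFev HFloc.
  assert (Hnormh0 : 0 <= normh).
  { replace 0 with (RInt (fun u => Rabs (h u)) 0 0) by (rewrite RInt_point; reflexivity).
    apply (RInt_le_is_RInt_gen _ 0); auto using Rabs_h_continuous, Rabs_pos; lra. }
  set (eta := gap / 2 / (normh + 1)).
  assert (Hetan : eta * normh <= gap / 2).
  { apply Rle_trans with (eta * (normh + 1)).
    - apply Rmult_le_compat_l; [apply Rlt_le, Rdiv_lt_0_compat|]; lra.
    - unfold eta. right. field. lra. }
  destruct (HFev eta) as [T1 [HT1 HF1]]; [apply Rdiv_lt_0_compat; lra|].
  destruct (HFloc T1) as [K HK].
  assert (HK0 : 0 <= K) by (eapply Rle_trans; [apply Rabs_pos | apply (HK 1); lra]).
  set (den := K * (T1 - 1) + Rabs (e' 1) + (1 + kad) * Rabs (e 1) + 1).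
  assert (Hden : 0 < den).
  { assert (0 <= K * (T1 - 1)) by (apply Rmult_le_pos; lra).
    assert (0 <= (1 + kad) * Rabs (e 1)) by (apply Rmult_le_pos; [lra | apply Rabs_pos]).
    pose proof (Rabs_pos (e' 1)). unfold den. lra. }
  set (eta' := gap / 2 / den).
  assert (Heta' : 0 < eta') by (apply Rdiv_lt_0_compat; lra).
  destruct (oscillator_vanishes kap kad h h' kap_gt0 kad_gt0 h_deriv h'_deriv eta' Heta')
    as [T2 HT2].
  exists (T1 + Rmax T2 0). intros t Ht.
  pose proof (Rmax_l T2 0). pose proof (Rmax_r T2 0).
  assert (Hstart : Rabs (W t 1) <= eta' * (Rabs (e' 1) + (1 + kad) * Rabs (e 1))).
  { destruct (HT2 (t - 1)) as [Hh Hh']; [lra|].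
    apply Rabs_free_response_le; assumption. }
  assert (Hmid : Rabs (W t T1 - W t 1) <= K * eta' * (T1 - 1)).
  { apply free_response_state_sub_small_kernel; [lra|].
    intros s Hs. split; [apply HT2; lra | apply HK; lra]. }
  assert (Htail : Rabs (W t t - W t T1) <= (B + eta) * normh).
  { apply free_response_state_sub_L1; [lra | easy |].
    intros s Hs. apply HF1. lra. }
  assert (Hsmall : eta' * (K * (T1 - 1) + Rabs (e' 1) + (1 + kad) * Rabs (e 1)) <= gap / 2).
  { replace (gap / 2) with (eta' * den) by (unfold eta'; field; lra).
    apply Rmult_le_compat_l; unfold den; lra. }
  assert (HWt : W t t = e t).
  { unfold W. replace (t - t) with 0 by ring. apply free_response_0. }
  rewrite <- HWt.
  replace (W t t) with (W t 1 + (W t T1 - W t 1) + (W t t - W t T1)) by ring.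
  eapply Rle_trans; [apply Rabs_triang|].
  eapply Rle_trans; [apply Rplus_le_compat_r, Rabs_triang|].
  lra.
Qed.

End VariationOfConstants.

Lemma ref_traj_ex_derive2 d eps cr a b t : ex_derive (Derive (ref_traj d eps cr a b)) t.
Proof.
  apply (ex_derive_ext (fun s => (b - cr * (b + cr * (a - (d - eps))) * s) * exp (- cr * s))).
  - intros s. symmetry. apply is_derive_unique. unfold ref_traj. auto_derive; [easy | ring].
  - auto_derive. easy.
Qed.

Lemma ref_traj_eventually_le d eps cr a b gap : 0 < cr -> 0 < gap ->
  exists T, forall t, T <= t -> ref_traj d eps cr a b t <= d - eps + gap.
Proof.
  intros Hcr Hgap.
  set (A := a - (d - eps)). set (Bc := b + cr * A).
  destruct (affine_mul_exp_eventually_le (Rabs A) (Rabs Bc) cr gap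
              (Rabs_pos _) (Rabs_pos _) Hcr Hgap) as [T HT].
  exists (Rmax T 0). intros t Ht.
  specialize (HT t (Rle_trans _ _ _ (Rmax_l T 0) Ht)).
  assert (Ht0 : 0 <= t) by exact (Rle_trans _ _ _ (Rmax_r T 0) Ht).
  unfold ref_traj. fold A Bc.
  replace (- cr * t) with (- (cr * t)) by ring.
  pose proof (exp_pos (- (cr * t))).
  assert (A * exp (- (cr * t)) <= Rabs A * exp (- (cr * t)))
    by (apply Rmult_le_compat_r; [lra | apply Rle_abs]).
  assert (Bc * t * exp (- (cr * t)) <= Rabs Bc * t * exp (- (cr * t)))
    by (apply Rmult_le_compat_r; [lra | apply Rmult_le_compat_r; [lra | apply Rle_abs]]).
  lra.
Qed.

Lemma observer_estimate_is_derive (wo : R) (f lam x2 xi : R -> R) (t : R) :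
  is_derive x2 t (f t - lam t) ->
  is_derive xi t (- wo * xi t - wo ^ 2 * x2 t + wo * lam t) ->
  is_derive (fun s => xi s + wo * x2 s) t (wo * (f t - (xi t + wo * x2 t))).
Proof.
  intros Hx2 Hxi.
  replace (wo * (f t - (xi t + wo * x2 t)))
    with ((- wo * xi t - wo ^ 2 * x2 t + wo * lam t) + wo * (f t - lam t)) by ring.
  apply (is_derive_plus xi (fun s => wo * x2 s)); [easy | apply (is_derive_scal x2); easy].
Qed.

Lemma closed_loop_error_is_derive (kap kad wo : R) (f r x1 x2 xi : R -> R) (t : R) :
  ex_derive (Derive r) t ->
  is_derive x2 t (f t - closed_loop_lambda kap kad wo r x1 x2 xi t) ->
  is_derive (fun s => x2 s - Derive r s) t
    (f t - (xi t + wo * x2 t) - kap * (x1 t - r t) - kad * (x2 t - Derive r t)).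
Proof.
  intros Hr2 Hx2.
  replace (f t - (xi t + wo * x2 t) - kap * (x1 t - r t) - kad * (x2 t - Derive r t))
    with ((f t - closed_loop_lambda kap kad wo r x1 x2 xi t) - Derive (Derive r) t)
    by (unfold closed_loop_lambda; change (Derive_n r 2 t) with (Derive (Derive r) t); ring).
  apply (is_derive_minus x2 (Derive r)); [easy | apply Derive_correct, Hr2].
Qed.

Theorem corollaryC9
  (kap kad wo cr d eps Lf : R)
  (f x1 x2 xi h h' : R -> R) (normh : R) :
  0 < kap -> 0 < kad -> 0 < wo -> 0 < cr -> 0 < eps -> 0 <= Lf ->
  (* f is Lf-Lipschitz on [0, oo) (absolutely continuous with |f'| <= Lf) *)
  (forall s t, 0 <= s -> 0 <= t -> Rabs (f t - f s) <= Lf * Rabs (t - s)) ->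
  (* solution of the closed loop on [0, oo) *)
  filterlim x1 (at_right 0) (locally (x1 0)) ->
  filterlim x2 (at_right 0) (locally (x2 0)) ->
  filterlim xi (at_right 0) (locally (xi 0)) ->
  (forall t, 0 < t -> is_derive x1 t (x2 t)) ->
  (forall t, 0 < t -> is_derive x2 t
      (f t - closed_loop_lambda kap kad wo (ref_traj d eps cr (x1 0) (x2 0)) x1 x2 xi t)) ->
  (forall t, 0 < t -> is_derive xi t
      (- wo * xi t - wo ^ 2 * x2 t
       + wo * closed_loop_lambda kap kad wo (ref_traj d eps cr (x1 0) (x2 0)) x1 x2 xi t)) ->
  (* h is the impulse response of 1 / (s^2 + kad s + kap) *)
  (forall t, is_derive h t (h' t)) ->
  (forall t, is_derive h' t (- kad * h' t - kap * h t)) ->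
  h 0 = 0 -> h' 0 = 1 ->
  (* normh = ||h||_{L1} = int_0^oo |h| *)
  is_RInt_gen (fun t => Rabs (h t)) (at_point 0) (Rbar_locally p_infty) normh ->
  eps > normh * Lf / wo ->
  exists T : R, forall t, T <= t -> x1 t <= d.
Proof.
  (* The solution is only differentiable for t > 0: all estimates start at time 1. *)
  intros Hkap Hkad Hwo Hcr Heps HLf Hlip _ _ _ Hx1 Hx2 Hxi Hh Hh' H0 H0' Hnormh Hsafe.
  set (r := ref_traj d eps cr (x1 0) (x2 0)) in *.
  set (fhat := fun s => xi s + wo * x2 s).
  set (gap := (eps - normh * Lf / wo) / 2).
  assert (Hgap : 0 < gap) by (unfold gap; lra).
  assert (Hfhat : forall s, 0 < s -> is_derive fhat s (wo * (f s - fhat s)))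
    by (intros s Hs; exact (observer_estimate_is_derive wo f _ x2 xi s (Hx2 s Hs) (Hxi s Hs))).
  assert (Herror : exists T, forall t, T <= t -> Rabs (x1 t - r t) <= normh * (Lf / wo) + gap).
  { apply (forced_oscillator_eventually_le kap kad h h' Hkap Hkad Hh Hh' H0 H0'
             (fun s => x1 s - r s) (fun s => x2 s - Derive r s) (fun s => f s - fhat s));
      [| | exact Hgap | exact Hnormh | |].
    - intros s Hs. apply (is_derive_minus x1 r); [auto | apply Derive_correct].
      unfold r, ref_traj. auto_derive. easy.
    - intros s Hs. apply closed_loop_error_is_derive; [apply ref_traj_ex_derive2 | auto].
    - exact (observer_error_eventually_le wo Lf f fhat Hwo HLf Hlip Hfhat).
    - exact (observer_error_locally_bounded wo Lf f fhat Hwo HLf Hlip Hfhat). }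
  destruct Herror as [Te HTe].
  destruct (ref_traj_eventually_le d eps cr (x1 0) (x2 0) gap Hcr Hgap) as [Tr HTr].
  fold r in HTr.
  exists (Rmax Te Tr). intros t Ht.
  specialize (HTe t (Rle_trans _ _ _ (Rmax_l _ _) Ht)).
  specialize (HTr t (Rle_trans _ _ _ (Rmax_r _ _) Ht)).
  pose proof (Rle_abs (x1 t - r t)).
  assert (normh * (Lf / wo) = normh * Lf / wo) by (field; lra).
  unfold gap in *. lra.
Qed.
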